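(* Let $M$ be a nonzero $\mathscr{D}(R,V)$-module such that $\pi M = (0)$. Then $\mathrm{Ann}_R(M) = \pi R$.
   Context: Let $(V, \pi V, k)$ be a DVR of mixed characteristic $(0,p)$ (i.e. $V$ has characteristic zero, maximal ideal generated by $\pi$, and residue field $k$ of characteristic $p>0$), and let $R$ be either $V[[x_1, \ldots, x_n]]$ or $V[x_1, \ldots, x_n]$ for some $n \geq 0$. $\mathscr{D}(R,V)$ denotes the ring of $V$-linear differential operators on $R$, and $\mathscr{D}(R,V)$-modules are left modules over it. *)

From HB Require Import structures.
From mathcomp Require Import all_boot all_order all_algebra.
From mathcomp Require Import mpoly.
Set Implicit Arguments. Unset Strict Implicit. Unset Printing Implicit Defensive.
Import Order.TTheory GRing.Theory Num.Theory.
Local Open Scope ring_scope.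

Definition is_DVR_with_uniformizer (V : idomainType) (pi : V) : Prop :=
  [/\ pi != 0, pi \isn't a GRing.unit &
      forall v : V, v != 0 ->
        exists (u : V) (k : nat), u \is a GRing.unit /\ v = u * pi ^+ k].

Definition char_zero (V : idomainType) : Prop := [pchar V] =i pred0.

(* residue field k = V / pi V has characteristic p *)
Definition residue_char (V : idomainType) (pi : V) (p : nat) : Prop :=
  prime p /\ exists w : V, p%:R = pi * w.

Definition pseries (n : nat) (V : Type) := 'X_{1..n} -> V.

Section PowerSeries.
Variables (V : comRingType) (n : nat).
Implicit Types f g : pseries n V.

Definition ps_add f g : pseries n V := fun m => f m + g m.
Definition ps_opp f : pseries n V := fun m => - f m.
Definition ps_zero : pseries n V := fun _ => 0.
Definition ps_mul f g : pseries n V := fun m =>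
  \sum_(a : 'X_{1..n < (mdeg m).+1} | (lem (a : 'X_{1..n}) m))
     f a * g (m - a)%MM.
Definition ps_const (c : V) : pseries n V :=
  fun m => if m == 0%MM then c else 0.
Definition ps_scale (c : V) f : pseries n V := fun m => c * f m.
End PowerSeries.

Section DiffOps.
Variables (V : comRingType) (R : Type).
Variables (add : R -> R -> R) (opp : R -> R) (mul : R -> R -> R)
          (scale : V -> R -> R).

Definition V_linear (d : R -> R) : Prop :=
  (forall f g, d (add f g) = add (d f) (d g)) /\
  (forall c f, d (scale c f) = scale c (d f)).

Definition commutator (d : R -> R) (r : R) : R -> R :=
  fun f => add (d (mul r f)) (opp (mul r (d f))).

Fixpoint diffop_of_order (k : nat) (d : R -> R) : Prop :=
  match k with
  | 0 => V_linear d /\ (forall r f, d (mul r f) = mul r (d f))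
  | k'.+1 => V_linear d /\ (forall r, diffop_of_order k' (commutator d r))
  end.

Definition is_diffop (d : R -> R) : Prop := exists k, diffop_of_order k d.

Definition is_DModule (M : zmodType) (act : (R -> R) -> M -> M) : Prop :=
  [/\ forall d, is_diffop d -> forall x y, act d (x + y) = act d x + act d y,
      forall d e, is_diffop d -> is_diffop e ->
        forall x, act (fun f => add (d f) (e f)) x = act d x + act e x,
      forall d e, is_diffop d -> is_diffop e ->
        forall x, act (d \o e) x = act d (act e x) &
      forall x, act id x = x].

Definition Ann_eq_piR (M : zmodType) (act : (R -> R) -> M -> M) (pi : R)
  : Prop :=
  forall r : R, (forall x : M, act (mul r) x = 0) <-> exists s : R, r = mul pi s.

End DiffOps.

From HB Require Import structures.
From mathcomp Require Import all_boot all_order all_algebra.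
From mathcomp Require Import mpoly.
From mathcomp Require Import boolp zify.
Import Order.TTheory GRing.Theory Num.Theory.
Local Open Scope ring_scope.
Set Implicit Arguments. Unset Strict Implicit. Unset Printing Implicit Defensive.

(* Ann_R(M) is an ideal of R containing pi. It is also stable under every
   Hasse-Schmidt family (H_k) of V-linear maps: H_k is a differential operator
   of order k, and the Leibniz rule writes H_k (r f) as (H_k r) f plus terms
   (H_j r) H_(k-j) f with j < k, so by induction H_k r kills M when r does.
   Now let r be in Ann_R(M) but not in pi R, so that some coefficient r_al is a
   unit, and take al of maximal degree among them. The Hasse derivative
   c := d^[al] r has constant term r_al, and its coefficient at m != 0 is a
   binomial multiple of r_(m+al), a non-unit of the DVR V, hence a multiple of
   pi. For polynomials this gives c = r_al + pi g, so the unit r_al lies in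
   Ann_R(M); for power series c is already a unit.
   Either way 1 kills M, so M = 0. *)

Section MultiIndexHasse.
Variables (n : nat) (T : Type) (Hi : 'I_n -> nat -> T -> T).

Definition hasse_multi (al : 'X_{1..n}) (p : T) : T :=
  foldr (fun i q => Hi i (al i) q) p (index_enum 'I_n).

Variables (V : pzRingType) (coef : T -> 'X_{1..n} -> V).
Hypothesis coef_Hi : forall i k p m,
  coef (Hi i k p) m = 'C(m i + k, k)%:R * coef p (m + U_(i) *+ k)%MM.

Lemma coef_hasse_multi al p m :
  coef (hasse_multi al p) m =
  (\prod_i 'C(m i + al i, al i))%:R * coef p (m + al)%MM.
Proof.
suff coef_foldr s m' : uniq s ->
    coef (foldr (fun i q => Hi i (al i) q) p s) m' =
    (\prod_(i <- s) 'C(m' i + al i, al i))%:R *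
      coef p (m' + \sum_(i <- s) U_(i) *+ al i)%MM.
  rewrite /hasse_multi coef_foldr ?index_enum_uniq //.
  by congr (_ * coef p (m + _)); rewrite [RHS]multinomUE_id.
elim: s m' => [|i s IH] m' /=; first by rewrite !big_nil mul1r addm0.
case/andP=> i_s s_uniq; rewrite coef_Hi IH // !big_cons natrM -mulrA addmA.
congr (_ * (_%:R * _)); apply: eq_big_seq => j j_s.
rewrite mnmDE mulmnE mnm1E; case: eqP => [ij|]; last by rewrite mul0n addn0.
by rewrite ij j_s in i_s.
Qed.

Lemma coef0_hasse_multi al p : coef (hasse_multi al p) 0%MM = coef p al.
Proof.
rewrite coef_hasse_multi add0m big1 ?mul1r // => i _.
by rewrite mnm0E add0n binn.
Qed.

End MultiIndexHasse.

Section DifferentialOperators.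
Variables (V : comNzRingType) (R : comNzRingType) (scale : V -> R -> R).
Hypothesis scaleD : forall c f g, scale c (f + g) = scale c f + scale c g.
Hypothesis scaleCA : forall c r f, scale c (r * f) = r * scale c f.

Local Notation diffop := (@diffop_of_order V R +%R -%R *%R scale).

Lemma diffop_ext k (d e : R -> R) : d =1 e -> diffop k d -> diffop k e.
Proof. by move/funext->. Qed.

Lemma diffop_mul r : diffop 0 ( *%R r).
Proof.
split; first split.
- by move=> f g; rewrite mulrDr.
- by move=> c f; rewrite scaleCA.
- by move=> s f; rewrite mulrCA.
Qed.

Lemma diffopS k d : diffop k d -> diffop k.+1 d.
Proof.
elim: k d => [|k IH] d /= [lin_d].
  move=> dM; split=> // r; apply: diffop_ext (diffop_mul 0) => f.
  by rewrite mul0r /commutator dM subrr.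
by move=> dC; split=> // r; apply: IH.
Qed.

Lemma diffop0 k : diffop k (fun=> 0).
Proof.
elim: k => [|k IH]; last exact: diffopS.
by apply: diffop_ext (diffop_mul 0) => f; rewrite mul0r.
Qed.

Lemma diffopD k d e : diffop k d -> diffop k e -> diffop k (fun f => d f + e f).
Proof.
elim: k d e => [|k IH] d e /= [[dD dZ] d_k] [[eD eZ] e_k].
  split; first split.
  - by move=> f g; rewrite dD eD addrACA.
  - by move=> c f; rewrite dZ eZ scaleD.
  - by move=> r f; rewrite d_k e_k mulrDr.
split; first split.
- by move=> f g; rewrite dD eD addrACA.
- by move=> c f; rewrite dZ eZ scaleD.
move=> r; apply: diffop_ext (IH _ _ (d_k r) (e_k r)) => f.
by rewrite /commutator mulrDr opprD addrACA.
Qed.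

Lemma diffopMl k s d : diffop k d -> diffop k (fun f => s * d f).
Proof.
elim: k d => [|k IH] d /= [[dD dZ] d_k].
  split; first split.
  - by move=> f g; rewrite dD mulrDr.
  - by move=> c f; rewrite dZ scaleCA.
  - by move=> r f; rewrite d_k mulrCA.
split; first split.
- by move=> f g; rewrite dD mulrDr.
- by move=> c f; rewrite dZ scaleCA.
move=> r; apply: diffop_ext (IH _ (d_k r)) => f.
by rewrite /commutator mulrDr mulrN mulrCA.
Qed.

Lemma diffop_sum k N (F : nat -> R -> R) :
  (forall j, diffop k (F j)) -> diffop k (fun f => \sum_(j < N) F j f).
Proof.
move=> F_k; elim: N => [|N IH].
  by apply: diffop_ext (diffop0 k) => f; rewrite big_ord0.
by apply: diffop_ext (diffopD IH (F_k N)) => f; rewrite big_ord_recr.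
Qed.

Definition hasse_schmidt (H : nat -> R -> R) : Prop :=
  [/\ forall k, V_linear +%R scale (H k),
      forall f, H 0 f = f &
      forall k f g, H k (f * g) = \sum_(j < k.+1) H j f * H (k - j)%N g].

Lemma hasse_schmidt_diffop H k j :
  hasse_schmidt H -> (j <= k)%N -> diffop k (H j).
Proof.
case=> H_lin H0 HM; elim: k j => [|k IH] j.
  rewrite leqn0 => /eqP ->; apply: diffop_ext (diffop_mul 1) => f.
  by rewrite mul1r H0.
rewrite leq_eqVlt ltnS => /predU1P[->|/IH/diffopS//].
split=> // r.
apply: diffop_ext (@diffop_sum k k.+1 (fun l f => H l.+1 r * H (k - l)%N f) _).
  move=> f; symmetry; rewrite /commutator HM big_ord_recl H0 subn0.
  by rewrite addrAC subrr add0r; apply: eq_bigr => i _; rewrite subSS.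
by move=> l; apply/diffopMl/IH/leq_subr.
Qed.

Section Annihilator.
Variables (M : zmodType) (act : (R -> R) -> M -> M).
Hypothesis actM : is_DModule +%R -%R *%R scale act.

Definition Ann (r : R) : Prop := forall x, act ( *%R r) x = 0.

Lemma act_add k d e x : diffop k d -> diffop k e ->
  act (fun f => d f + e f) x = act d x + act e x.
Proof. by case: actM => _ actD _ _ dk ek; apply: actD; exists k. Qed.

Lemma act_comp k l d e x : diffop k d -> diffop l e ->
  act (d \o e) x = act d (act e x).
Proof. by case: actM => _ _ actC _ dk el; apply: actC; [exists k | exists l]. Qed.

Lemma act0 k d : diffop k d -> act d 0 = 0.
Proof.
case: actM => actD _ _ _ dk; apply: (addrI (act d 0)).
by rewrite -actD ?addr0 //; exists k.
Qed.

Lemma act_op0 x : act (fun=> 0) x = 0.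
Proof.
apply: (addrI (act (fun=> 0) x)).
rewrite addr0 -(act_add x (diffop0 0) (diffop0 0)).
by congr act; apply: funext => f; rewrite addr0.
Qed.

Lemma act_sum k N (F : nat -> R -> R) x : (forall j, diffop k (F j)) ->
  act (fun f => \sum_(j < N) F j f) x = \sum_(j < N) act (F j) x.
Proof.
move=> F_k; elim: N => [|N IH].
  rewrite big_ord0 -(act_op0 x); congr act; apply: funext => f; exact: big_ord0.
rewrite big_ord_recr /= -IH -(act_add x (diffop_sum N F_k) (F_k N)).
by congr act; apply: funext => f; rewrite big_ord_recr.
Qed.

Lemma Ann_mull s r : Ann r -> Ann (s * r).
Proof.
move=> Ar x; have -> : *%R (s * r) = *%R s \o *%R r.
  by apply: funext => f; rewrite /= mulrA.
by rewrite (act_comp x (diffop_mul s) (diffop_mul r)) Ar (act0 (diffop_mul s)).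
Qed.

Lemma Ann_add a b : Ann a -> Ann b -> Ann (a + b).
Proof.
move=> Aa Ab x; have -> : *%R (a + b) = (fun f => a * f + b * f).
  by apply: funext => f; rewrite mulrDl.
by rewrite (act_add x (diffop_mul a) (diffop_mul b)) Aa Ab addr0.
Qed.

Lemma Ann_sub a b : Ann a -> Ann b -> Ann (a - b).
Proof. by move=> Aa Ab; rewrite -mulN1r; apply/Ann_add/Ann_mull. Qed.

Lemma Ann1_trivial : Ann 1 -> forall x : M, x = 0.
Proof.
move=> A1 x; case: actM => _ _ _ actI.
by rewrite -[LHS]actI -(A1 x); congr act; apply: funext => f; rewrite /= mul1r.
Qed.

Lemma Ann_hasse_schmidt H k r : hasse_schmidt H -> Ann r -> Ann (H k r).
Proof.
move=> HH Ar; elim/ltn_ind: k => k IH x.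
have Hk := hasse_schmidt_diffop HH (leqnn k).
have F_k j : diffop k (fun f => H j r * H (k - j)%N f).
  exact/diffopMl/(hasse_schmidt_diffop HH)/leq_subr.
have : act (H k \o *%R r) x = 0.
  by rewrite (act_comp x Hk (diffop_mul r)) Ar (act0 Hk).
have -> : H k \o *%R r = (fun f => \sum_(j < k.+1) H j r * H (k - j)%N f).
  by apply: funext => f /=; case: HH => _ _ ->.
rewrite (act_sum _ _ F_k) big_ord_recr /= big1 ?add0r => [|j _]; last first.
  have Hj := hasse_schmidt_diffop HH (leq_subr j k).
  by rewrite (act_comp x (diffop_mul (H j r)) Hj) IH // (act0 Hk).
rewrite subnn; case: HH => _ H0 _ <-.
by congr act; apply: funext => f; rewrite H0.
Qed.

Lemma Ann_eq_piR_of (pi : R) : (exists x : M, x != 0) -> Ann pi ->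
  (forall r, Ann r -> (exists s, r = pi * s) \/ Ann 1) ->
  Ann_eq_piR *%R act pi.
Proof.
move=> [x nx] Api Ann_dvd r; split=> [Ar | [s ->]].
  case: (Ann_dvd r Ar) => // /Ann1_trivial/(_ x) x0.
  by rewrite x0 eqxx in nx.
by rewrite mulrC; apply: Ann_mull.
Qed.

Lemma Ann_hasse_multi n (Hi : 'I_n -> nat -> R -> R) al r :
  (forall i, hasse_schmidt (Hi i)) -> Ann r -> Ann (hasse_multi Hi al r).
Proof.
move=> HHi Ar; rewrite /hasse_multi.
by elim: (index_enum _) => //= i s; apply: Ann_hasse_schmidt.
Qed.

End Annihilator.
End DifferentialOperators.

Section PolynomialHasse.
Variables (n : nat) (V : comNzRingType).
Implicit Types (p q : {mpoly V[n]}) (m a b : 'X_{1..n}).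

Definition mhasse (i : 'I_n) (k : nat) p : {mpoly V[n]} :=
  \sum_(a <- msupp p) ('C(a i, k)%:R * p@_a) *: 'X_[a - U_(i) *+ k].

Lemma mcoeff_mhasse i k p m :
  (mhasse i k p)@_m = 'C(m i + k, k)%:R * p@_(m + U_(i) *+ k).
Proof.
rewrite /mhasse [in RHS](mpolyE p) !raddf_sum /= mulr_sumr; apply: eq_bigr => a _.
rewrite !mcoeffZ !mcoeffX; have [->|ne] := eqVneq a (m + U_(i) *+ k)%MM.
  by rewrite addmK eqxx mnmDE mulmnE mnm1E eqxx mul1n mulrA.
rewrite mulr0 mulr0.
have [-> | nz] := eqVneq 'C(a i, k) 0%N; first by rewrite !mul0r.
case: eqP => [am|]; last by rewrite mulr0.
suff: a = (m + U_(i) *+ k)%MM by move/eqP; rewrite (negbTE ne).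
rewrite -am submK //; apply/mnm_lepP => l; rewrite mulmnE mnm1E.
by case: eqP => [<-|]; rewrite ?mul0n // mul1n -bin_gt0 lt0n.
Qed.

Lemma mhasse_is_linear i k : linear (mhasse i k).
Proof.
move=> c p q; apply/mpolyP => m.
by rewrite mcoeffD mcoeffZ !mcoeff_mhasse mcoeffD mcoeffZ mulrDr mulrCA.
Qed.

HB.instance Definition _ i k := GRing.isLinear.Build V {mpoly V[n]} {mpoly V[n]}
  _ (mhasse i k) (mhasse_is_linear i k).

Lemma mhasseX i k a : mhasse i k 'X_[a] = 'C(a i, k)%:R *: 'X_[a - U_(i) *+ k].
Proof. by rewrite /mhasse msuppX big_seq1 mcoeffX eqxx mulr1. Qed.

Lemma mhasse_leibnizX i k a b :
  mhasse i k ('X_[a] * 'X_[b]) =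
  \sum_(j < k.+1) mhasse i j 'X_[a] * mhasse i (k - j) 'X_[b].
Proof.
rewrite -mpolyXD mhasseX.
have termE (j : 'I_k.+1) : mhasse i j 'X_[a] * mhasse i (k - j) 'X_[b] =
    ('C(a i, j) * 'C(b i, k - j))%:R *: 'X_[a + b - U_(i) *+ k].
  rewrite !mhasseX -scalerAr -scalerAl scalerA -natrM mulnC -mpolyXD.
  have [-> | ] := eqVneq ('C(a i, j) * 'C(b i, k - j))%N 0%N.
    by rewrite !scale0r.
  rewrite muln_eq0 negb_or -!lt0n !bin_gt0 => /andP[ja jb].
  congr (_ *: 'X_[_]); apply/mnmP => l; have := ltn_ord j.
  rewrite !(mnmDE, mnmBE, mulmnE, mnm1E).
  by case: eqP => [<-|_]; rewrite ?mul0n ?subn0 // !mul1n; lia.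
rewrite (eq_bigr _ (fun j _ => termE j)) -scaler_suml -natr_sum.
by rewrite mnmDE binomial.Vandermonde.
Qed.

Lemma mhasse_leibniz i k p q :
  mhasse i k (p * q) = \sum_(j < k.+1) mhasse i j p * mhasse i (k - j) q.
Proof.
rewrite (mpolyE p) (mpolyE q) mulr_suml.
under eq_bigr do rewrite mulr_sumr.
rewrite !raddf_sum /=.
under eq_bigr do rewrite raddf_sum /=.
under [RHS]eq_bigr do rewrite !raddf_sum /= big_distrlr.
rewrite [RHS]exchange_big /=; apply: eq_bigr => a _.
rewrite [RHS]exchange_big /=; apply: eq_bigr => b _.
rewrite -scalerAl -scalerAr !linearZ /= mhasse_leibnizX scaler_sumr scaler_sumr.
by apply: eq_bigr => j _; rewrite !linearZ /= -scalerAr -scalerAl.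
Qed.

Lemma hasse_schmidt_mhasse i : hasse_schmidt *:%R (mhasse i).
Proof.
split=> [k | p | ]; last exact: mhasse_leibniz.
  by split=> [p q | c p]; [exact: raddfD | exact: linearZ].
by apply/mpolyP => m; rewrite mcoeff_mhasse mulm0n addm0 addn0 bin0 mul1r.
Qed.

End PolynomialHasse.

Section PowerSeriesRing.
Variables (n : nat) (V : comNzRingType).
Implicit Types (f g h : pseries n V) (m a b : 'X_{1..n}).

Definition ps_trunc (K : nat) f : {mpoly V[n]} :=
  \sum_(a : 'X_{1..n < K.+1}) f a *: 'X_[a].

Lemma mcoeff_ps_trunc K f m : (mdeg m <= K)%N -> (ps_trunc K f)@_m = f m.
Proof. by move=> mK; rewrite (mcoeff_mpoly (fun a => f a)). Qed.

(* The coefficients of degree at most K of a product only involve those of the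
   factors, so identities between series reduce to identities between their
   truncations in {mpoly V[n]}. *)
Lemma ps_mul_trunc K f g m : (mdeg m <= K)%N ->
  ps_mul f g m = (ps_trunc K f * ps_trunc K g)@_m.
Proof.
move=> mK; rewrite mcoeffM /ps_mul; set d := mdeg m.
have low (a : 'X_{1..n < d.+1}) : (mdeg a <= K)%N.
  by apply: leq_trans mK; rewrite -ltnS bmdeg.
under [RHS]eq_bigr do rewrite !mcoeff_ps_trunc ?low //.
transitivity (\sum_(a : 'X_{1..n < d.+1})
  \sum_(b : 'X_{1..n < d.+1} | m == (val a + val b)%MM) f a * g b);
  last by rewrite pair_big_dep.
rewrite big_mkcond /=; apply: eq_bigr => a _.
case: (boolP (val a <= m)%MM) => [am | not_am]; last first.
  rewrite big_pred0 // => b; apply/negbTE/eqP => mab.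
  by move: not_am; rewrite mab lem_addr.
have mam : (mdeg (m - a)%MM < d.+1)%N by rewrite ltnS mdegB.
rewrite (big_pred1 (Sub (m - a)%MM mam : 'X_{1..n < d.+1})) // => b /=.
apply/eqP/eqP => [mab | ->]; last by rewrite /= addmC submK.
by apply: val_inj; rewrite SubK mab addmC addmK.
Qed.

Lemma mcoeffM_low K (p p' q q' : {mpoly V[n]}) m : (mdeg m <= K)%N ->
  (forall a, (mdeg a <= K)%N -> p@_a = p'@_a) ->
  (forall a, (mdeg a <= K)%N -> q@_a = q'@_a) ->
  (p * q)@_m = (p' * q')@_m.
Proof.
move=> mK pp' qq'; rewrite !mcoeffM; apply: eq_bigr => ab _.
have low (a : 'X_{1..n < (mdeg m).+1}) : (mdeg a <= K)%N.
  by apply: leq_trans mK; rewrite -ltnS bmdeg.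
by rewrite pp' ?qq' ?low.
Qed.

Lemma ps_trunc_mul K f g a : (mdeg a <= K)%N ->
  (ps_trunc K (ps_mul f g))@_a = (ps_trunc K f * ps_trunc K g)@_a.
Proof. by move=> aK; rewrite mcoeff_ps_trunc // (ps_mul_trunc _ _ aK). Qed.

Lemma ps_mulA : associative (@ps_mul V n).
Proof.
move=> f g h; apply: funext => m; set K := mdeg m.
rewrite [LHS](ps_mul_trunc _ _ (leqnn K)) [RHS](ps_mul_trunc _ _ (leqnn K)).
rewrite (@mcoeffM_low K _ (ps_trunc K f) _ (ps_trunc K g * ps_trunc K h)) //;
  last by move=> a; apply: ps_trunc_mul.
rewrite mulrA; apply: (mcoeffM_low (leqnn K)) => // a aK.
by rewrite ps_trunc_mul.
Qed.

Lemma ps_mulC : commutative (@ps_mul V n).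
Proof.
move=> f g; apply: funext => m.
by rewrite !(ps_mul_trunc _ _ (leqnn (mdeg m))) mulrC.
Qed.

Lemma ps_mul_constl c f m : ps_mul (@ps_const V n c) f m = c * f m.
Proof.
rewrite (ps_mul_trunc _ _ (leqnn (mdeg m))).
rewrite -[f m](mcoeff_ps_trunc f (leqnn _)) -mcoeffCM.
apply: (mcoeffM_low (leqnn _)) => a aK; rewrite mcoeff_ps_trunc //.
by rewrite mcoeffC /ps_const; case: eqP; rewrite ?mulr1 ?mulr0.
Qed.

Lemma ps_mul1 : left_id (@ps_const V n 1) (@ps_mul V n).
Proof. by move=> f; apply: funext => m; rewrite ps_mul_constl mul1r. Qed.

Lemma ps_mulDl : left_distributive (@ps_mul V n) (@ps_add V n).
Proof.
move=> f g h; apply: funext => m; rewrite /ps_mul /ps_add -big_split /=.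
by apply: eq_bigr => a _; rewrite mulrDl.
Qed.

Lemma ps_addA : associative (@ps_add V n).
Proof. by move=> f g h; apply: funext => m; rewrite /ps_add addrA. Qed.

Lemma ps_addC : commutative (@ps_add V n).
Proof. by move=> f g; apply: funext => m; rewrite /ps_add addrC. Qed.

Lemma ps_add0 : left_id (@ps_zero V n) (@ps_add V n).
Proof. by move=> f; apply: funext => m; rewrite /ps_add add0r. Qed.

Lemma ps_addN : left_inverse (@ps_zero V n) (@ps_opp V n) (@ps_add V n).
Proof. by move=> f; apply: funext => m; rewrite /ps_add /ps_opp addNr. Qed.

Lemma ps_one_neq0 : @ps_const V n 1 != @ps_zero V n.
Proof.
apply/eqP => /(congr1 (fun f : pseries n V => f 0%MM)).
by rewrite /ps_const eqxx; apply/eqP; rewrite oner_eq0.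
Qed.

HB.instance Definition _ := gen_eqMixin (pseries n V).
HB.instance Definition _ := gen_choiceMixin (pseries n V).
HB.instance Definition _ :=
  GRing.isZmodule.Build (pseries n V) ps_addA ps_addC ps_add0 ps_addN.
HB.instance Definition _ := GRing.Zmodule_isComNzRing.Build (pseries n V)
  ps_mulA ps_mulC ps_mul1 ps_mulDl ps_one_neq0.

Lemma ps_sumE (I : Type) (r : seq I) (P : pred I) (F : I -> pseries n V) m :
  (\sum_(j <- r | P j) F j) m = \sum_(j <- r | P j) F j m.
Proof. by elim/big_rec2: _ => // j y1 y2 _ <-. Qed.

Lemma ps_subE f g m : (f - g) m = f m - g m.
Proof. by []. Qed.

Lemma ps_oneE m : (1 : pseries n V) m = (m == 0%MM)%:R.
Proof. by rewrite -[LHS]/(@ps_const V n 1 m) /ps_const; case: (m == 0%MM). Qed.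

Lemma ps_constMl c f m : (@ps_const V n c * f) m = c * f m.
Proof. exact: ps_mul_constl. Qed.

Lemma ps_scaleDr c f g :
  ps_scale c (f + g) = ps_scale c f + ps_scale c g.
Proof. by apply: funext => m; rewrite /ps_scale /= /ps_add mulrDr. Qed.

Lemma ps_scaleAr c r f :
  ps_scale c (r * f) = r * ps_scale c f.
Proof.
apply: funext => m; rewrite /ps_scale /= /ps_mul mulr_sumr.
by apply: eq_bigr => a _; rewrite mulrCA.
Qed.

End PowerSeriesRing.

Section PowerSeriesHasse.
Variables (n : nat) (V : comNzRingType).
Implicit Types (f g : pseries n V) (m a : 'X_{1..n}).

Definition phasse (i : 'I_n) (k : nat) f : pseries n V :=
  fun m => 'C(m i + k, k)%:R * f (m + U_(i) *+ k)%MM.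

Lemma mdeg_mnm1n (i : 'I_n) k : mdeg (U_(i) *+ k)%MM = k.
Proof. by rewrite mdegMn mdeg1 mul1n. Qed.

Lemma phasse_leibniz i k f g :
  phasse i k (f * g) = \sum_(j < k.+1) phasse i j f * phasse i (k - j) g.
Proof.
apply: funext => m; rewrite ps_sumE.
have mK : (mdeg (m + U_(i) *+ k)%MM <= mdeg m + k)%N by rewrite mdegD mdeg_mnm1n.
rewrite /phasse [X in _ * X](ps_mul_trunc _ _ mK) -mcoeff_mhasse mhasse_leibniz.
rewrite raddf_sum /=; apply: eq_bigr => j _.
rewrite [RHS](ps_mul_trunc _ _ (leqnn (mdeg m))).
have jk : (j <= k)%N by rewrite -ltnS.
apply: (mcoeffM_low (leqnn (mdeg m))) => a am;
  by rewrite mcoeff_mhasse !mcoeff_ps_trunc // mdegD mdeg_mnm1n leq_add ?leq_subr.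
Qed.

Lemma hasse_schmidt_phasse i : hasse_schmidt (@ps_scale V n) (phasse i).
Proof.
split=> [k | f | ]; last exact: phasse_leibniz.
- split=> [f g | c f]; apply: funext => m; rewrite /phasse /ps_scale /=.
    by rewrite /ps_add mulrDr.
  by rewrite mulrCA.
- by apply: funext => m; rewrite /phasse mulm0n addm0 addn0 bin0 mul1r.
Qed.

End PowerSeriesHasse.

Section PowerSeriesUnit.
Variables (n : nat) (V : comUnitRingType).
Implicit Types (f g h : pseries n V) (m a : 'X_{1..n}).

Lemma mdeg_subm a m : (a <= m)%MM -> a != 0%MM -> (mdeg (m - a) < mdeg m)%N.
Proof.
move=> am a0; rewrite -[in X in (_ < X)%N](submK am) mdegD -addn1 leq_add2l.
by rewrite lt0n mdeg_eq0.
Qed.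

Lemma ps_mul_low f g g' m : (forall a, (a <= m)%MM -> g a = g' a) ->
  (f * g) m = (f * g') m.
Proof.
move=> gg'; change (ps_mul f g m = ps_mul f g' m).
by apply: eq_bigr => a _; rewrite gg' ?lem_subr.
Qed.

Lemma ps_exprn_low h k m : h 0%MM = 0 -> (mdeg m < k)%N -> (h ^+ k) m = 0.
Proof.
move=> h0; elim: k m => // k IH m mk; rewrite exprS.
change (ps_mul h (h ^+ k) m = 0); apply: big1 => a am.
have [-> | a0] := eqVneq (val a) 0%MM; first by rewrite h0 mul0r.
by rewrite IH ?mulr0 //; apply: leq_trans (mdeg_subm am a0) _.
Qed.

Lemma ps_geom_low h K m : h 0%MM = 0 -> (mdeg m < K.+1)%N ->
  (\sum_(k < K.+1) h ^+ k) m = (\sum_(k < (mdeg m).+1) h ^+ k) m.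
Proof.
move=> h0 mK; rewrite !ps_sumE.
rewrite [RHS](big_ord_widen K.+1 (fun k => (h ^+ k) m) mK).
rewrite [RHS]big_mkcond; apply: eq_bigr => k _.
by case: ltnP => // mk; rewrite ps_exprn_low.
Qed.

Lemma ps_unit f : f 0%MM \is a GRing.unit -> exists g, f * g = 1.
Proof.
move=> f0; set c := @ps_const V n (f 0%MM)^-1.
set h := 1 - c * f; pose S K := \sum_(k < K.+1) h ^+ k.
have h0 : h 0%MM = 0.
  by rewrite /h /c ps_subE ps_oneE ps_constMl mulVr // eqxx subrr.
exists (fun m => (c * S (mdeg m)) m); apply: funext => m.
rewrite (@ps_mul_low _ _ (c * S (mdeg m))) => [|a am]; last first.
  rewrite /c !ps_constMl /S (@ps_geom_low h (mdeg m)) //.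
  by rewrite ltnS lemc_mdeg ?lem_leo.
have -> : f * (c * S (mdeg m)) = (1 - h) * S (mdeg m).
  by rewrite /h opprB addrC subrK mulrCA mulrA.
by rewrite -opprB mulNr -subrX1 opprB ps_subE ps_exprn_low ?subr0.
Qed.

End PowerSeriesUnit.

Lemma dvr_nonunit_dvd (V : idomainType) (pi v : V) :
  is_DVR_with_uniformizer pi -> v \isn't a GRing.unit -> exists w, v = pi * w.
Proof.
case=> _ _ vE; have [-> | /vE[u [[|k] [u_unit ->]]]] := eqVneq v 0.
- by exists 0; rewrite mulr0.
- by rewrite expr0 mulr1 u_unit.
- by exists (u * pi ^+ k); rewrite exprS mulrCA.
Qed.

Lemma mpoly_dvd_coef (n : nat) (V : comNzRingType) (pi : V) (p : {mpoly V[n]}) :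
  (forall m, exists w, p@_m = pi * w) -> exists q, p = pi%:MP * q.
Proof.
move=> p_dvd; exists (\sum_(m <- msupp p) sval (cid (p_dvd m)) *: 'X_[m]).
rewrite {1}[p]mpolyE mulr_sumr; apply: eq_bigr => m _.
by rewrite mul_mpolyC scalerA -(svalP (cid (p_dvd m))).
Qed.

Lemma mpoly_max_unit_coef (n : nat) (V : comUnitRingType) (r : {mpoly V[n]}) m :
  r@_m \is a GRing.unit ->
  exists2 al, r@_al \is a GRing.unit &
    forall m', m' != 0%MM -> r@_(m' + al) \isn't a GRing.unit.
Proof.
have unit_supp a : r@_a \is a GRing.unit -> (mdeg a < msize r)%N.
  move=> ua; apply: msize_mdeg_lt; rewrite mcoeff_msupp.
  by apply: contraTneq ua => ->; rewrite unitr0.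
move=> um; pose a0 : 'X_{1..n < msize r} := Sub m (unit_supp m um).
have [al ual al_max] := @arg_maxnP _ a0
  (fun a => r@_(val a) \is a GRing.unit) (fun a => mdeg (val a)) um.
exists (val al) => // m' m'0; apply/negP => u.
have := al_max (Sub (m' + val al)%MM (unit_supp _ u)) u.
rewrite /= mdegD -{2}[mdeg (val al)]add0n leq_add2r leqn0 mdeg_eq0.
by rewrite (negbTE m'0).
Qed.

Section PolynomialAnnihilator.
Variables (V : idomainType) (pi : V) (n : nat).
Hypothesis HV : is_DVR_with_uniformizer pi.
Variables (M : zmodType) (act : ({mpoly V[n]} -> {mpoly V[n]}) -> M -> M).
Hypothesis actM : is_DModule +%R -%R *%R *:%R act.
Hypothesis Api : Ann act pi%:MP.

Local Notation scaleD := (@scalerDr V {mpoly V[n]}).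
Local Notation scaleCA := (@scalerAr V {mpoly V[n]}).

Lemma Ann_mpoly_unit_coef r m : Ann act r -> r@_m \is a GRing.unit -> Ann act 1.
Proof.
move=> Ar /mpoly_max_unit_coef[al ual al_max].
pose c := hasse_multi (@mhasse n V) al r.
have Ac : Ann act c.
  exact: (Ann_hasse_multi scaleD scaleCA actM al (@hasse_schmidt_mhasse n V) Ar).
have [g cE] : exists g, c - (r@_al)%:MP = pi%:MP * g.
  apply: mpoly_dvd_coef => m'; rewrite mcoeffB mcoeffC.
  have [-> | m'0] := eqVneq m' 0%MM.
    exists 0; rewrite (coef0_hasse_multi (coef := fun p m => p@_m)).
      by rewrite mulr1 subrr mulr0.
    exact: mcoeff_mhasse.
  rewrite (coef_hasse_multi (coef := fun p m => p@_m)) ?mulr0 ?subr0;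
    last exact: mcoeff_mhasse.
  have [w ->] := dvr_nonunit_dvd HV (al_max _ m'0).
  by exists ((\prod_i 'C(m' i + al i, al i))%:R * w); rewrite mulrCA.
have Aal : Ann act (r@_al)%:MP.
  have -> : (r@_al)%:MP = c - pi%:MP * g by rewrite -cE subKr.
  apply: (Ann_sub scaleCA actM Ac).
  by rewrite mulrC; apply: (Ann_mull scaleCA actM).
have -> : 1 = (r@_al)^-1%:MP * (r@_al)%:MP :> {mpoly V[n]}.
  by rewrite -mpolyCM mulVr.
exact: (Ann_mull scaleCA actM).
Qed.

Lemma Ann_mpoly_dvd_or_Ann1 r :
  Ann act r -> (exists s, r = pi%:MP * s) \/ Ann act 1.
Proof.
move=> Ar; have [[m um] | no_unit] := pselect (exists m, r@_m \is a GRing.unit).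
  by right; apply: Ann_mpoly_unit_coef Ar um.
left; apply: mpoly_dvd_coef => m; apply: (dvr_nonunit_dvd HV).
by apply/negP => um; apply: no_unit; exists m.
Qed.

End PolynomialAnnihilator.

Section PowerSeriesAnnihilator.
Variables (V : idomainType) (pi : V) (n : nat).
Hypothesis HV : is_DVR_with_uniformizer pi.
Variables (M : zmodType) (act : (pseries n V -> pseries n V) -> M -> M).
Hypothesis actM : is_DModule +%R -%R *%R (@ps_scale V n) act.

Lemma Ann_pseries_unit_coef r m : Ann act r -> r m \is a GRing.unit -> Ann act 1.
Proof.
move=> Ar um; pose c := hasse_multi (@phasse n V) m r.
have Ac : Ann act c.
  exact: (Ann_hasse_multi (@ps_scaleDr n V) (@ps_scaleAr n V) actM m
            (@hasse_schmidt_phasse n V) Ar).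
have [g <-] : exists g, c * g = 1.
  by apply: ps_unit; rewrite /c (coef0_hasse_multi (coef := fun f m => f m)).
by rewrite mulrC; apply: (Ann_mull (@ps_scaleAr n V) actM).
Qed.

Lemma Ann_pseries_dvd_or_Ann1 r :
  Ann act r -> (exists s, r = @ps_const V n pi * s) \/ Ann act 1.
Proof.
move=> Ar; have [[m um] | no_unit] := pselect (exists m, r m \is a GRing.unit).
  by right; apply: Ann_pseries_unit_coef Ar um.
left; have r_dvd m : exists w, r m = pi * w.
  by apply: (dvr_nonunit_dvd HV); apply/negP => um; apply: no_unit; exists m.
exists (fun m => sval (cid (r_dvd m))); apply: funext => m.
by rewrite ps_constMl -(svalP (cid (r_dvd m))).
Qed.

End PowerSeriesAnnihilator.

Unset Implicit Arguments.
Set Strict Implicit.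

Theorem lemma3p4 (V : idomainType) (pi : V) (p : nat) (n : nat)
  (HV : is_DVR_with_uniformizer pi) (H0 : char_zero V)
  (Hp : residue_char pi p) :
  (forall (M : zmodType) (act : ({mpoly V[n]} -> {mpoly V[n]}) -> M -> M),
     is_DModule (V := V) +%R -%R *%R *:%R act ->
     (exists x : M, x != 0) ->
     (forall x : M, act ( *%R pi%:MP) x = 0) ->
     Ann_eq_piR *%R act pi%:MP)
  /\
  (forall (M : zmodType) (act : (pseries n V -> pseries n V) -> M -> M),
     is_DModule (@ps_add V n) (@ps_opp V n) (@ps_mul V n) (@ps_scale V n) act ->
     (exists x : M, x != 0) ->
     (forall x : M, act (ps_mul (@ps_const V n pi)) x = 0) ->
     Ann_eq_piR (@ps_mul V n) act (@ps_const V n pi)).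
Proof.
split=> M act actM M_nz Api.
  apply: (Ann_eq_piR_of (@scalerAr V _) actM M_nz Api).
  exact: Ann_mpoly_dvd_or_Ann1.
apply: (@Ann_eq_piR_of V (pseries n V) _ (@ps_scaleAr n V) M act actM _ M_nz Api).
exact: Ann_pseries_dvd_or_Ann1.
Qed.
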